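(* Let $d\ge 3$, $\lambda>0$ with $\log d\lesssim\lambda\lesssim d$, $\rho_0=\log^{-c_0}d$ for a constant $c_0>0$, $\mu=\rho_0/(d+\lambda)$, and let $(a,b,c)$ solve \[ \dot a=a(24-16a-8r),\quad \dot b=8(1+\lambda)(1-r)b-16(1+\lambda)^2b^2,\quad \dot c=8(1-r)c-16c^2, \] with $r=a+(1+\lambda)b+(d-2)c$ and $a(0)=b(0)=c(0)=\mu$. Let $C=(d-2)c$, fix $\rho\in(0,1/12)$ and $\varepsilon\in(0,1/4]$, and define $T_{1a}=\inf\{t\ge0:r(t)\ge\rho\}$, $T_1=\inf\{t\ge T_{1a}:\dot b(t)\le0\}$, $T_{2a}=\inf\{t\ge T_1: r(t)\ge 1-\varepsilon\}$. Then, for $d$ large enough: (1) $T_{2a}-T_1=\Theta(\log(1/\rho_0))=\Theta(\log\log d)$; (2) $C(T_{2a})\ge\frac23-\varepsilon-o(1)$, and hence $c(T_{2a})=\Theta(1/d)$; (3) $a(T_{2a})=\mu\,\rho_0^{-O(1)}=\frac{\log^{O(1)}d}{d+\lambda}=o(1)$; (4) $\mathrm{Align}(T_{2a})\le O(\sqrt d\,a(T_{2a}))=o(1)$.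
   Context: This ODE is the population gradient flow of the phase-retrieval model $y=(x^\top w_\star)^2+\nu$, $x\sim\mathcal N(0,I_d+\lambda vv^\top)$ ($v\perp w_\star$ unit vectors), with network $f_W(x)=\sum_{j=1}^d(w_j^\top x)^2$, in the coordinates $WW^\top=a\,w_\star w_\star^\top+b\,vv^\top+c(I-w_\star w_\star^\top-vv^\top)$, started from $WW^\top=\mu I_d$. The alignment is $\mathrm{Align}(t)=a(t)/\sqrt{a(t)^2+b(t)^2+(d-2)c(t)^2}$. Asymptotic notation refers to $d\to\infty$ with $\varepsilon,\rho$ fixed. *)

From Stdlib Require Import Reals Lra.
Open Scope R_scope.

Definition rho0 (d : nat) (c0 : R) : R := Rpower (ln (INR d)) (- c0).
Definition mu (d : nat) (lam c0 : R) : R := rho0 d c0 / (INR d + lam).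

Definition rr (d : nat) (lam : R) (a b c : R -> R) (t : R) : R :=
  a t + (1 + lam) * b t + (INR d - 2) * c t.

Definition adot (d : nat) (lam : R) (a b c : R -> R) (t : R) : R :=
  a t * (24 - 16 * a t - 8 * rr d lam a b c t).
Definition bdot (d : nat) (lam : R) (a b c : R -> R) (t : R) : R :=
  8 * (1 + lam) * (1 - rr d lam a b c t) * b t - 16 * (1 + lam) ^ 2 * (b t) ^ 2.
Definition cdot (d : nat) (lam : R) (a b c : R -> R) (t : R) : R :=
  8 * (1 - rr d lam a b c t) * c t - 16 * (c t) ^ 2.

Definition solves (d : nat) (lam c0 : R) (a b c : R -> R) : Prop :=
  a 0 = mu d lam c0 /\ b 0 = mu d lam c0 /\ c 0 = mu d lam c0 /\
  forall t, 0 <= t ->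
    derivable_pt_lim a t (adot d lam a b c t) /\
    derivable_pt_lim b t (bdot d lam a b c t) /\
    derivable_pt_lim c t (cdot d lam a b c t).

(* x is the infimum of the set S (this forces S to be nonempty) *)
Definition is_inf (S : R -> Prop) (x : R) : Prop :=
  (forall y, S y -> x <= y) /\
  (forall z, (forall y, S y -> z <= y) -> z <= x).

Definition Align (d : nat) (a b c : R -> R) (t : R) : R :=
  a t / sqrt ((a t) ^ 2 + (b t) ^ 2 + (INR d - 2) * (c t) ^ 2).

(* While r < rho, bdot = 8 (1 + lam) b g with
   g = 1 - r - 2 (1 + lam) b >= 3/4, so b grows like exp (6 (1 + lam) t) from mu >= d^-6 and,
   as lam >= K1 log d, r reaches rho before time 1/K1, with a and C = (d - 2) c still
   O(rho0).  Then g decays, first exponentially and afterwards linearly because C keeps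
   growing, so T1 <= T1a + 2.  From then on 1 - r >= min rho eps, hence C grows at rate at
   least 4 min rho eps from C(0) ~ rho0 up to order one, which takes Theta (log (1/rho0));
   meanwhile a grows at most like exp (24 t), so a(T2a) = mu rho0^-O(1).  Finally g cannot
   go below -3 / ((1 + lam) eps), since there its derivative is positive; at T2a this pins
   (1 + lam) b to at most about (1 - r) / 2 and forces C >= 2/3 - eps - o(1). *)

From Stdlib Require Import Reals Lra Classical.
From Coquelicot Require Import Hierarchy Rcomplements.
Open Scope R_scope.

Lemma exp_le x y : x <= y -> exp x <= exp y.
Proof. intros [Hlt| ->]; [left; apply exp_increasing|]; lra. Qed.

Lemma ln_le_inv x y : 0 < x -> 0 < y -> ln x <= ln y -> x <= y.
Proof.
  intros Hx Hy H. destruct (Rle_or_lt x y) as [|Hlt]; [easy|].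
  apply ln_increasing in Hlt; lra.
Qed.

Lemma ln_le_add_div x k : 0 < x -> 0 < k -> ln x <= ln k + x / k.
Proof.
  intros Hx Hk. pose proof (exp_ineq1_le (ln x - ln k)) as H.
  unfold Rminus in H. rewrite exp_plus, exp_Ropp, !exp_ln in H by easy.
  assert (0 < x / k) by (apply Rdiv_lt_0_compat; easy). unfold Rdiv in *. lra.
Qed.

Lemma derivable_pt_lim_ln_comp f t l : 0 < f t -> derivable_pt_lim f t l ->
  derivable_pt_lim (fun u => ln (f u)) t (l / f t).
Proof.
  intros Hpos Hf. replace (l / f t) with (/ f t * l) by (field; lra).
  apply (derivable_pt_lim_comp f ln); [easy | now apply derivable_pt_lim_ln].
Qed.

Lemma derivable_pt_lim_affine (f g h : R -> R) k0 k1 k2 k3 t lf lg lh :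
  derivable_pt_lim f t lf -> derivable_pt_lim g t lg -> derivable_pt_lim h t lh ->
  derivable_pt_lim (fun u => k0 + k1 * f u + k2 * g u + k3 * h u) t
    (k1 * lf + k2 * lg + k3 * lh).
Proof.
  intros Hf Hg Hh.
  replace (k1 * lf + k2 * lg + k3 * lh) with (0 + k1 * lf + k2 * lg + k3 * lh) by ring.
  repeat apply derivable_pt_lim_plus; try apply derivable_pt_lim_scal; try easy.
  apply derivable_pt_lim_const.
Qed.

Lemma mvt_le f f' s t K : s <= t ->
  (forall u, s <= u <= t -> derivable_pt_lim f u (f' u)) ->
  (forall u, s < u < t -> f' u <= K) -> f t - f s <= K * (t - s).
Proof.
  intros [Hst| ->] Hd Hb; [|lra].
  destruct (MVT_cor2 f f' s t Hst Hd) as (u & -> & Hu).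
  apply Rmult_le_compat_r; [lra | auto].
Qed.

Lemma mvt_ge f f' s t K : s <= t ->
  (forall u, s <= u <= t -> derivable_pt_lim f u (f' u)) ->
  (forall u, s < u < t -> K <= f' u) -> K * (t - s) <= f t - f s.
Proof.
  intros [Hst| ->] Hd Hb; [|lra].
  destruct (MVT_cor2 f f' s t Hst Hd) as (u & -> & Hu).
  apply Rmult_le_compat_r; [lra | auto].
Qed.

Lemma ln_growth_le x x' s t K : s <= t ->
  (forall u, s <= u <= t -> 0 < x u /\ derivable_pt_lim x u (x' u)) ->
  (forall u, s < u < t -> x' u <= K * x u) -> ln (x t) - ln (x s) <= K * (t - s).
Proof.
  intros Hst Hd Hb. apply (mvt_le (fun u => ln (x u)) (fun u => x' u / x u)); [easy| |].
  - intros u Hu. destruct (Hd u Hu). now apply derivable_pt_lim_ln_comp.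
  - intros u Hu. destruct (Hd u ltac:(lra)) as [Hpos _].
    apply Rle_div_l; [lra|]. auto.
Qed.

Lemma ln_growth_ge x x' s t K : s <= t ->
  (forall u, s <= u <= t -> 0 < x u /\ derivable_pt_lim x u (x' u)) ->
  (forall u, s < u < t -> K * x u <= x' u) -> K * (t - s) <= ln (x t) - ln (x s).
Proof.
  intros Hst Hd Hb. apply (mvt_ge (fun u => ln (x u)) (fun u => x' u / x u)); [easy| |].
  - intros u Hu. destruct (Hd u Hu). now apply derivable_pt_lim_ln_comp.
  - intros u Hu. destruct (Hd u ltac:(lra)) as [Hpos _].
    apply Rle_div_r; [lra|]. auto.
Qed.

Lemma continuity_pt_nbhd f x eps : continuity_pt f x -> 0 < eps ->
  exists del, 0 < del /\ forall y, Rabs (y - x) < del -> Rabs (f y - f x) < eps.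
Proof.
  intros Hc He. destruct (Hc eps He) as (del & Hdel & Hy).
  exists del; split; [easy|]. intros y Hxy.
  destruct (Req_dec y x) as [->|Hne].
  - unfold Rminus; rewrite Rplus_opp_r, Rabs_R0; easy.
  - apply Hy. repeat split; easy.
Qed.

Lemma continuity_left_le f x0 x K : continuity_pt f x -> x0 < x ->
  (forall t, x0 < t < x -> f t <= K) -> f x <= K.
Proof.
  intros Hc Hx H. apply Rnot_lt_le. intro Hlt.
  destruct (continuity_pt_nbhd f x (f x - K) Hc ltac:(lra)) as (del & Hdel & Hn).
  set (t := x - Rmin del (x - x0) / 2).
  pose proof (Rmin_l del (x - x0)). pose proof (Rmin_r del (x - x0)).
  pose proof (Rmin_pos del (x - x0) Hdel ltac:(lra)).
  specialize (H t ltac:(unfold t; lra)).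
  specialize (Hn t ltac:(apply Rabs_def1; unfold t; lra)).
  apply Rabs_def2 in Hn. lra.
Qed.

Lemma continuity_left_ge f x0 x K : continuity_pt f x -> x0 < x ->
  (forall t, x0 < t < x -> K <= f t) -> K <= f x.
Proof.
  intros Hc Hx H.
  enough (- f x <= - K) by lra.
  apply (continuity_left_le (- f)%F x0); [now apply continuity_pt_opp | easy |].
  intros t Ht. unfold opp_fct. specialize (H t Ht). lra.
Qed.

Lemma is_inf_exists (S : R -> Prop) m : (exists y, S y) -> (forall y, S y -> m <= y) ->
  exists x, is_inf S x.
Proof.
  intros [y0 Hy0] Hm.
  destruct (completeness (fun z => S (- z))) as [M [HM1 HM2]].
  - exists (- m). intros z Hz. specialize (Hm _ Hz). lra.
  - exists (- y0). now rewrite Ropp_involutive.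
  - exists (- M). split.
    + intros y Hy. enough (- y <= M) by lra. apply HM1. now rewrite Ropp_involutive.
    + intros z Hz. enough (M <= - z) by lra.
      apply HM2. intros w Hw. specialize (Hz _ Hw). lra.
Qed.

Lemma is_inf_iff (S S' : R -> Prop) x : (forall t, S t <-> S' t) -> is_inf S x -> is_inf S' x.
Proof.
  intros HS [H1 H2]. split.
  - intros y Hy. apply H1, HS, Hy.
  - intros z Hz. apply H2. intros y Hy. apply Hz, HS, Hy.
Qed.

Lemma first_passage f s K : (forall t, s <= t -> continuity_pt f t) ->
  (exists t, s <= t /\ K <= f t) ->
  exists T, is_inf (fun t => s <= t /\ K <= f t) T /\ s <= T /\ K <= f T /\
    (forall u, s <= u < T -> f u < K).
Proof.
  intros Hc Hex.
  destruct (is_inf_exists (fun t => s <= t /\ K <= f t) s Hex) as [T [Hlow Hgreat]];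
    [now intros y [Hy _]|].
  assert (HsT : s <= T) by (apply Hgreat; now intros y [Hy _]).
  assert (Hbefore : forall u, s <= u < T -> f u < K).
  { intros u Hu. apply Rnot_le_lt. intro HKu. specialize (Hlow u (conj (proj1 Hu) HKu)). lra. }
  exists T. split; [now split|]. split; [easy|]. split; [|easy].
  apply Rnot_lt_le. intro HfT.
  destruct (continuity_pt_nbhd f T (K - f T) (Hc T HsT) ltac:(lra)) as (del & Hdel & Hn).
  assert (T + del <= T); [|lra].
  apply Hgreat. intros y [Hy HKy]. apply Rnot_lt_le. intro Hyd.
  specialize (Hlow y (conj Hy HKy)).
  specialize (Hn y ltac:(apply Rabs_def1; lra)). apply Rabs_def2 in Hn. lra.
Qed.

Lemma first_passage_before f s K B : (forall t, s <= t -> continuity_pt f t) ->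
  (forall t, s <= t -> (forall u, s <= u < t -> f u < K) -> t <= B) ->
  exists T, is_inf (fun t => s <= t /\ K <= f t) T /\ s <= T <= B /\ K <= f T /\
    (forall u, s <= u < T -> f u < K).
Proof.
  intros Hc HB.
  destruct (first_passage f s K Hc) as (T & Hinf & HsT & HKT & Hbefore).
  - apply NNPP. intro Hnever.
    set (t := Rmax s B + 1). pose proof (Rmax_l s B). pose proof (Rmax_r s B).
    enough (t <= B) by (unfold t in *; lra).
    apply HB; [unfold t; lra|]. intros u Hu. apply Rnot_le_lt. intro HKu.
    apply Hnever. exists u. split; [lra | easy].
  - exists T. split; [easy|]. split; [split; [easy | now apply HB]|]. easy.
Qed.

Lemma derive_barrier f f' p q m :
  (forall u, p <= u <= q -> derivable_pt_lim f u (f' u)) -> m <= f p ->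
  (forall u, p < u < q -> f u < m -> 0 < f' u) ->
  forall t, p <= t <= q -> m <= f t.
Proof.
  intros Hd Hp Hpush t Ht. apply Rnot_lt_le. intro Hft.
  destruct (completeness (fun u => p <= u <= t /\ m <= f u)) as [s [Hub Hlub]].
  { exists t. intros y Hy; lra. }
  { exists p. split; lra. }
  assert (Hps : p <= s) by (apply Hub; split; lra).
  assert (Hst : s <= t) by (apply Hlub; intros y Hy; lra).
  assert (Hafter : forall u, s < u <= t -> f u < m).
  { intros u Hu. apply Rnot_le_lt. intro Hmu. assert (u <= s) by (apply Hub; split; lra). lra. }
  assert (Hfs : m <= f s).
  { apply Rnot_lt_le. intro Hlt.
    assert (Hc : continuity_pt f s)
      by (apply derivable_continuous_pt; exists (f' s); apply Hd; lra).
    destruct (continuity_pt_nbhd f s (m - f s) Hc ltac:(lra)) as (del & Hdel & Hn).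
    assert (s <= s - del / 2); [|lra].
    apply Hlub. intros y [Hy Hmy]. apply Rnot_lt_le. intro Hyd.
    assert (y <= s) by (apply Hub; easy).
    specialize (Hn y ltac:(apply Rabs_def1; lra)). apply Rabs_def2 in Hn. lra. }
  assert (Hlt : s < t) by (destruct Hst as [| ->]; lra).
  destruct (MVT_cor2 f f' s t Hlt (fun u Hu => Hd u ltac:(lra))) as (xi & Heq & Hxi).
  pose proof (Hpush xi ltac:(lra) (Hafter xi ltac:(lra))).
  assert (0 < f' xi * (t - s)) by (apply Rmult_lt_0_compat; lra). lra.
Qed.

Lemma mul_ode_pos (x g : R -> R) : 0 < x 0 ->
  (forall t, 0 <= t -> derivable_pt_lim x t (x t * g t)) ->
  (forall t, 0 <= t -> continuity_pt g t) -> forall t, 0 <= t -> 0 < x t.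
Proof.
  intros Hx0 Hd Hg t1 Ht1. apply Rnot_le_lt. intro Hneg.
  assert (Hxc : forall t, 0 <= t -> continuity_pt x t).
  { intros t Ht. apply derivable_continuous_pt. exists (x t * g t). exact (Hd t Ht). }
  destruct (first_passage (fun t => - x t) 0 0) as (T & _ & HT0 & HxT & Hbefore).
  { intros t Ht. exact (continuity_pt_opp x t (Hxc t Ht)). }
  { exists t1. split; [easy | lra]. }
  assert (HTpos : 0 < T) by (destruct HT0 as [| <-]; lra).
  destruct (continuity_pt_nbhd g T 1 (Hg T ltac:(lra)) ltac:(lra)) as (del & Hdel & Hnear).
  set (M := Rabs (g T) + 1).
  set (s := T - Rmin del T / 2).
  pose proof (Rmin_l del T). pose proof (Rmin_r del T). pose proof (Rmin_pos del T Hdel HTpos).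
  assert (Hs : 0 <= s < T) by (unfold s; lra).
  assert (Hpos : forall v, s <= v < T -> 0 < x v)
    by (intros v Hv; specialize (Hbefore v ltac:(lra)); lra).
  (* on (s, T) the rate g stays above -M, so x decays at most exponentially *)
  assert (Hdecay : forall u, s < u < T -> x s * exp (- M * (T - s)) <= x u).
  { intros u Hu.
    assert (- M * (u - s) <= ln (x u) - ln (x s)).
    { apply (ln_growth_ge x (fun v => x v * g v)); [lra| |].
      - intros v Hv. split; [apply Hpos; lra | apply Hd; lra].
      - intros v Hv. specialize (Hnear v ltac:(apply Rabs_def1; unfold s in *; lra)).
        apply Rabs_def2 in Hnear. pose proof (Rle_abs (- g T)). rewrite Rabs_Ropp in *.
        pose proof (Hpos v ltac:(lra)). unfold M. nra. }
    rewrite <- (exp_ln (x u)) by (apply Hpos; lra).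
    rewrite <- (exp_ln (x s)) at 1 by (apply Hpos; lra). rewrite <- exp_plus.
    apply exp_le. pose proof (Rabs_pos (g T)). unfold M in *. nra. }
  pose proof (continuity_left_ge x s T _ (Hxc T ltac:(lra)) ltac:(lra) Hdecay).
  pose proof (exp_pos (- M * (T - s))). pose proof (Hpos s ltac:(lra)). nra.
Qed.

Lemma Rpower_exponent_bound x m y K : 0 < x < 1 -> 0 < m <= y ->
  ln y - ln m <= K * - ln x -> exists e, Rabs e <= K /\ y = m * Rpower x (- e).
Proof.
  intros Hx Hm Hy.
  assert (Hlx : 0 < - ln x).
  { pose proof (ln_increasing x 1 (proj1 Hx) (proj2 Hx)) as H. rewrite ln_1 in H. lra. }
  assert (Hmy : ln m <= ln y) by (apply ln_le; lra).
  exists ((ln y - ln m) / - ln x). split.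
  - rewrite Rabs_right; [now apply Rle_div_l|].
    apply Rle_ge, Rdiv_le_0_compat; lra.
  - unfold Rpower. replace (- ((ln y - ln m) / - ln x) * ln x) with (ln y - ln m) by (field; lra).
    unfold Rminus. rewrite exp_plus, exp_Ropp, !exp_ln by lra. field. lra.
Qed.

(** * Asymptotics in d *)

Lemma eventually_INR_ge X : eventually (fun d => X <= INR d).
Proof.
  destruct (INR_unbounded X) as [N HN]. exists N. intros d Hd. apply le_INR in Hd. lra.
Qed.

Lemma eventually_ln_ge X k : 0 < k -> eventually (fun d => X <= k * ln (INR d)).
Proof.
  intros Hk. apply (filter_imp (fun d => exp (X / k) <= INR d)); [|apply eventually_INR_ge].
  intros d Hd. rewrite Rmult_comm. apply Rle_div_l; [lra|].
  rewrite <- (ln_exp (X / k)). apply ln_le; [apply exp_pos | easy].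
Qed.

Lemma eventually_lnln_ge X k : 0 < k -> eventually (fun d => X <= k * ln (ln (INR d))).
Proof.
  intros Hk. apply (filter_imp (fun d => exp (X / k) <= 1 * ln (INR d)));
    [|apply eventually_ln_ge; lra].
  intros d Hd. rewrite Rmult_comm. apply Rle_div_l; [lra|].
  rewrite <- (ln_exp (X / k)). apply ln_le; [apply exp_pos | lra].
Qed.

Lemma eventually_lnln_le_ln A P B : 0 < P -> 0 < B ->
  eventually (fun d => A + P * ln (ln (INR d)) <= B * ln (INR d)).
Proof.
  intros HP HB. set (k := 2 * P / B).
  assert (Hk : 0 < k) by (unfold k; apply Rdiv_lt_0_compat; lra).
  apply (filter_imp (fun d => 1 <= 1 * ln (INR d) /\ 2 * (A + P * ln k) <= B * ln (INR d)));
    [|apply filter_and; apply eventually_ln_ge; lra].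
  intros d [H1 H2]. set (y := ln (INR d)) in *.
  pose proof (ln_le_add_div y k ltac:(lra) Hk).
  assert (P * (y / k) = B * y / 2) by (unfold k; field; lra).
  nra.
Qed.

Lemma rho0_pos d c0 : 0 < rho0 d c0.
Proof. apply exp_pos. Qed.

Lemma ln_rho0 d c0 : ln (rho0 d c0) = - c0 * ln (ln (INR d)).
Proof. apply ln_exp. Qed.

Lemma ln_inv_rho0 d c0 : ln (/ rho0 d c0) = c0 * ln (ln (INR d)).
Proof. rewrite ln_Rinv by apply rho0_pos. rewrite ln_rho0. ring. Qed.

Lemma one_le_ln_INR d : 3 <= INR d -> 1 <= ln (INR d).
Proof.
  intros Hd. rewrite <- (ln_exp 1). apply ln_le; [apply exp_pos|]. pose proof exp_le_3. lra.
Qed.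

Lemma lnln_INR_nonneg d : 3 <= INR d -> 0 <= ln (ln (INR d)).
Proof. intros Hd. rewrite <- ln_1. apply ln_le; [lra | now apply one_le_ln_INR]. Qed.

Lemma eventually_rho0_le c0 x : 0 < c0 -> 0 < x -> eventually (fun d => rho0 d c0 <= x).
Proof.
  intros Hc0 Hx. apply (filter_imp (fun d => - ln x <= c0 * ln (ln (INR d))));
    [|now apply eventually_lnln_ge].
  intros d Hd. rewrite <- (exp_ln x) by easy. apply exp_le. lra.
Qed.

(* Quantitative forms of "d large enough"; [dl] is the accuracy delta of (2)-(4), capped at 1/8. *)
Local Set Implicit Arguments.
Record large_d (d : nat) (lam c0 rho eps K1 K2 dl : R) : Prop := {
  ld_dim : 2 + 4 / Rmin rho eps <= INR d;
  ld_lam : K1 * ln (INR d) <= lam <= K2 * INR d;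
  ld_mu : ln (1 + K2) + c0 * ln (ln (INR d)) <= 5 * ln (INR d);
  ld_rho0 : rho0 d c0 <= rho / (4 * exp (24 * (/ K1 + 2)));
  ld_phaseB : ln (3 * (1 + K2)) - ln (4 * rho) + c0 * ln (ln (INR d))
                <= 12 * K1 * rho * ln (INR d);
  ld_phaseC : ln (3 * (1 + K2)) <= c0 * ln (ln (INR d));
  ld_barrier : 36 / eps <= K1 * ln (INR d);
  ld_duration : ln 3 + 8 * (/ K1 + 2) <= c0 / 2 * ln (ln (INR d));
  ld_align : ln 3 - ln dl + 12 * c0 / Rmin rho eps * ln (ln (INR d)) <= 1 / 2 * ln (INR d)
}.
Local Unset Implicit Arguments.

Lemma large_d_eventually (lam : nat -> R) c0 rho eps K1 K2 dl :
  0 < c0 -> 0 < rho -> 0 < eps -> 0 < K1 -> 0 < K2 ->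
  eventually (fun d => K1 * ln (INR d) <= lam d <= K2 * INR d) ->
  eventually (fun d => large_d d (lam d) c0 rho eps K1 K2 dl).
Proof.
  intros Hc0 Hrho Heps HK1 HK2 Hlam.
  pose proof (Rmin_pos rho eps Hrho Heps) as Hk0.
  assert (Hrho' : 0 < rho / (4 * exp (24 * (/ K1 + 2))))
    by (pose proof (exp_pos (24 * (/ K1 + 2))); apply Rdiv_lt_0_compat; lra).
  assert (HB : 0 < 12 * K1 * rho) by (apply Rmult_lt_0_compat; [lra | easy]).
  assert (HP : 0 < 12 * c0 / Rmin rho eps) by (apply Rdiv_lt_0_compat; lra).
  assert (Hfive : 0 < 5) by lra. assert (Hhalf : 0 < 1 / 2) by lra.
  assert (Hc0' : 0 < c0 / 2) by lra.
  pose proof (filter_and _ _ (eventually_INR_ge (2 + 4 / Rmin rho eps)) (filter_and _ _ Hlam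
    (filter_and _ _ (eventually_lnln_le_ln (ln (1 + K2)) c0 5 Hc0 Hfive)
    (filter_and _ _ (eventually_rho0_le c0 _ Hc0 Hrho')
    (filter_and _ _ (eventually_lnln_le_ln (ln (3 * (1 + K2)) - ln (4 * rho)) c0 _ Hc0 HB)
    (filter_and _ _ (eventually_lnln_ge (ln (3 * (1 + K2))) c0 Hc0)
    (filter_and _ _ (eventually_ln_ge (36 / eps) K1 HK1)
    (filter_and _ _ (eventually_lnln_ge (ln 3 + 8 * (/ K1 + 2)) (c0 / 2) Hc0')
      (eventually_lnln_le_ln (ln 3 - ln dl) _ (1 / 2) HP Hhalf))))))))) as Hall.
  revert Hall. apply filter_imp. intros d Hd. decompose [and] Hd. now constructor.
Qed.

(** * The dynamics *)

Lemma Align_le (d : nat) (a b c : R -> R) t : 3 <= INR d -> 0 < a t ->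
  1 / 3 <= (INR d - 2) * c t -> Align d a b c t <= 3 * (sqrt (INR d) * a t).
Proof.
  intros Hd Ha Hc. unfold Align.
  set (S := a t ^ 2 + b t ^ 2 + (INR d - 2) * c t ^ 2).
  (* S >= (d-2) c^2 >= 1 / (9 (d - 2)) *)
  assert (HS : 1 <= 9 * INR d * S).
  { unfold S. assert (0 <= a t ^ 2 + b t ^ 2) by nra.
    assert ((INR d - 2) * ((INR d - 2) * c t ^ 2) <= INR d * ((INR d - 2) * c t ^ 2)) by nra.
    nra. }
  assert (Hsqrt : 1 <= 3 * (sqrt (INR d) * sqrt S)).
  { replace (3 * (sqrt (INR d) * sqrt S)) with (sqrt (9 * INR d * S)).
    - rewrite <- sqrt_1. now apply sqrt_le_1_alt.
    - rewrite !sqrt_mult by nra. replace 9 with (3 * 3) by ring. rewrite sqrt_square; lra. }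
  assert (0 < sqrt S) by (apply sqrt_lt_R0; nra).
  apply Rle_div_l; [lra|]. nra.
Qed.

Definition bfactor (d : nat) (lam : R) (a b c : R -> R) (t : R) : R :=
  1 - rr d lam a b c t - 2 * ((1 + lam) * b t).

Definition bfactor_dot (d : nat) (lam : R) (a b c : R -> R) (t : R) : R :=
  - adot d lam a b c t - 3 * (1 + lam) * bdot d lam a b c t - (INR d - 2) * cdot d lam a b c t.

Section Dynamics.

Variables (d : nat) (lam c0 : R) (a b c : R -> R).
Hypotheses (Hd : 3 <= INR d) (Hlam : 0 < lam) (Hsol : solves d lam c0 a b c).

Local Notation r := (rr d lam a b c).
Local Notation g := (bfactor d lam a b c).
Local Notation dg := (bfactor_dot d lam a b c).
Local Notation da := (adot d lam a b c).
Local Notation db := (bdot d lam a b c).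
Local Notation dc := (cdot d lam a b c).
Local Notation L := (1 + lam).
Local Notation n := (INR d - 2).

Lemma abc_derivable t : 0 <= t ->
  derivable_pt_lim a t (da t) /\ derivable_pt_lim b t (db t) /\ derivable_pt_lim c t (dc t).
Proof. destruct Hsol as (_ & _ & _ & H). apply H. Qed.

Lemma affine_abc_derivable k0 k1 k2 k3 t : 0 <= t ->
  derivable_pt_lim (fun u => k0 + k1 * a u + k2 * b u + k3 * c u) t
    (k1 * da t + k2 * db t + k3 * dc t).
Proof.
  intros Ht. destruct (abc_derivable t Ht) as (Ha & Hb & Hc).
  now apply derivable_pt_lim_affine.
Qed.

Lemma affine_abc_continuous k0 k1 k2 k3 t : 0 <= t ->
  continuity_pt (fun u => k0 + k1 * a u + k2 * b u + k3 * c u) t.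
Proof.
  intros Ht. apply derivable_continuous_pt. eexists. exact (affine_abc_derivable k0 k1 k2 k3 t Ht).
Qed.

Lemma rr_derivable t : 0 <= t -> derivable_pt_lim r t (da t + L * db t + n * dc t).
Proof.
  intros Ht. replace (da t + L * db t + n * dc t) with (1 * da t + L * db t + n * dc t) by ring.
  apply (derivable_pt_lim_ext (fun u => 0 + 1 * a u + L * b u + n * c u));
    [intros u; unfold rr; ring | now apply affine_abc_derivable].
Qed.

Lemma bfactor_derivable t : 0 <= t -> derivable_pt_lim g t (dg t).
Proof.
  intros Ht. unfold bfactor_dot.
  replace (- da t - 3 * L * db t - n * dc t)
    with (-1 * da t + (-3 * L) * db t + - n * dc t) by ring.
  apply (derivable_pt_lim_ext (fun u => 1 + -1 * a u + (-3 * L) * b u + - n * c u));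
    [intros u; unfold bfactor, rr; ring | now apply affine_abc_derivable].
Qed.

Lemma rr_continuous t : 0 <= t -> continuity_pt r t.
Proof. intros Ht. apply derivable_continuous_pt. eexists. exact (rr_derivable t Ht). Qed.

Lemma bfactor_continuous t : 0 <= t -> continuity_pt g t.
Proof. intros Ht. apply derivable_continuous_pt. eexists. exact (bfactor_derivable t Ht). Qed.

Lemma mu_pos : 0 < mu d lam c0.
Proof. apply Rdiv_lt_0_compat; [apply rho0_pos | lra]. Qed.

Lemma mu_le : mu d lam c0 <= rho0 d c0 / INR d.
Proof.
  apply Rmult_le_compat_l; [left; apply rho0_pos|]. apply Rinv_le_contravar; lra.
Qed.

(* Each equation has the form x' = x * (affine combination of a, b, c). *)
Lemma solution_pos t : 0 <= t -> 0 < a t /\ 0 < b t /\ 0 < c t.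
Proof.
  destruct Hsol as (Ha0 & Hb0 & Hc0 & _). pose proof mu_pos.
  intros Ht. split; [|split].
  - apply (mul_ode_pos a (fun u => 24 + (-24) * a u + (-8 * L) * b u + (-8 * n) * c u));
      [lra | | intros; now apply affine_abc_continuous | easy].
    intros u Hu. replace (a u * _) with (da u) by (unfold adot, rr; ring). now apply abc_derivable.
  - apply (mul_ode_pos b
      (fun u => 8 * L + (-8 * L) * a u + (-24 * L * L) * b u + (-8 * L * n) * c u));
      [lra | | intros; now apply affine_abc_continuous | easy].
    intros u Hu. replace (b u * _) with (db u) by (unfold bdot, rr; ring). now apply abc_derivable.
  - apply (mul_ode_pos c (fun u => 8 + (-8) * a u + (-8 * L) * b u + (-8 * n - 16) * c u));
      [lra | | intros; now apply affine_abc_continuous | easy].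
    intros u Hu. replace (c u * _) with (dc u) by (unfold cdot, rr; ring). now apply abc_derivable.
Qed.

Lemma components_le_rr t : 0 <= t -> a t <= r t /\ L * b t <= r t /\ n * c t <= r t.
Proof.
  intros Ht. destruct (solution_pos t Ht) as (Ha & Hb & Hc). unfold rr. repeat split; nra.
Qed.

Lemma rr_at_0 : r 0 = rho0 d c0.
Proof.
  destruct Hsol as (Ha0 & Hb0 & Hc0 & _). unfold rr, mu in *. rewrite Ha0, Hb0, Hc0. field. lra.
Qed.

Lemma bdot_eq t : db t = 8 * L * b t * g t.
Proof. unfold bdot, bfactor. ring. Qed.

Lemma bdot_nonpos_iff t : 0 <= t -> db t <= 0 <-> g t <= 0.
Proof.
  intros Ht. rewrite bdot_eq. destruct (solution_pos t Ht) as (_ & Hb & _).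
  assert (0 < 8 * L * b t) by nra. split; intro; nra.
Qed.

Lemma bfactor_dot_eq t : dg t = - da t - 24 * L * (L * b t) * g t - n * dc t.
Proof. unfold bfactor_dot. rewrite bdot_eq. ring. Qed.

Lemma adot_le t : 0 <= t -> da t <= 24 * a t.
Proof.
  intros Ht. destruct (solution_pos t Ht) as (Ha & _). pose proof (components_le_rr t Ht).
  unfold adot. nra.
Qed.

Lemma adot_nonneg t : 0 <= t -> r t <= 1 -> 0 <= da t.
Proof.
  intros Ht Hr. destruct (solution_pos t Ht) as (Ha & _). pose proof (components_le_rr t Ht).
  unfold adot. nra.
Qed.

Lemma cdot_le t : 0 <= t -> dc t <= 8 * c t.
Proof.
  intros Ht. destruct (solution_pos t Ht) as (Ha & _ & Hc). pose proof (components_le_rr t Ht).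
  unfold cdot. nra.
Qed.

Lemma cdot_ge k t : 0 <= t -> 4 / n <= k -> r t <= 1 -> k <= 1 - r t -> 4 * k * c t <= dc t.
Proof.
  intros Ht Hk Hr Hgap. destruct (solution_pos t Ht) as (_ & _ & Hc).
  destruct (components_le_rr t Ht) as (_ & _ & HC).
  apply Rle_div_l in Hk; [|lra].
  (* n c <= r <= 1 and 4 <= k n give 16 c <= 4 k *)
  assert (16 * c t <= 4 * k) by nra.
  unfold cdot. nra.
Qed.

Lemma bfactor_dot_pos eps t : 0 <= t -> 0 < eps -> r t < 1 - eps ->
  g t < - (3 / (L * eps)) -> 0 < dg t.
Proof.
  intros Ht Heps Hr Hg. rewrite bfactor_dot_eq.
  set (eta := 3 / (L * eps)) in *.
  assert (Heta : 24 * L * (eps / 2 * eta) = 36) by (unfold eta; field; lra).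
  assert (0 < eta) by (unfold eta; apply Rdiv_lt_0_compat; nra).
  destruct (solution_pos t Ht) as (Ha & Hb & Hc).
  pose proof (adot_le t Ht). pose proof (cdot_le t Ht).
  (* g < -eta forces L b > eps / 2, so the -24 L (L b) g term exceeds 36 *)
  assert (HLb : eps / 2 < L * b t) by (unfold bfactor in Hg; lra).
  assert (eps / 2 * eta < L * b t * - g t) by (apply Rmult_le_0_lt_compat; lra).
  assert (24 * L * (eps / 2 * eta) < 24 * L * (L * b t * - g t)) by (apply Rmult_lt_compat_l; lra).
  unfold rr in Hr. nra.
Qed.

Lemma a_le_exp t : 0 <= t -> a t <= mu d lam c0 * exp (24 * t).
Proof.
  intros Ht. destruct Hsol as (Ha0 & _).
  assert (H : ln (a t) - ln (a 0) <= 24 * (t - 0)).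
  { apply (ln_growth_le a da); [easy| |].
    - intros u Hu. split; [apply solution_pos | apply abc_derivable]; lra.
    - intros u Hu. apply adot_le. lra. }
  rewrite Ha0 in H. rewrite <- (exp_ln (a t)) by (apply solution_pos, Ht).
  rewrite <- (exp_ln (mu d lam c0)) by apply mu_pos. rewrite <- exp_plus. apply exp_le. lra.
Qed.

Lemma ln_c_lipschitz s t : 0 <= s <= t -> ln (c t) - ln (c s) <= 8 * (t - s).
Proof.
  intros Hst. apply (ln_growth_le c dc); [lra| |].
  - intros u Hu. split; [apply solution_pos | apply abc_derivable]; lra.
  - intros u Hu. apply cdot_le. lra.
Qed.

Lemma C_le_exp t : 0 <= t -> n * c t <= rho0 d c0 * exp (8 * t).
Proof.
  intros Ht. destruct Hsol as (_ & _ & Hc0 & _).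
  pose proof (ln_c_lipschitz 0 t ltac:(lra)) as H. rewrite Hc0 in H.
  assert (Hct : c t <= mu d lam c0 * exp (8 * t)).
  { rewrite <- (exp_ln (c t)) by (apply solution_pos, Ht).
    rewrite <- (exp_ln (mu d lam c0)) by apply mu_pos. rewrite <- exp_plus. apply exp_le. lra. }
  assert (n * mu d lam c0 <= rho0 d c0).
  { unfold mu. pose proof (rho0_pos d c0).
    replace (n * (rho0 d c0 / (INR d + lam))) with (rho0 d c0 * (n / (INR d + lam)))
      by (field; lra).
    rewrite <- (Rmult_1_r (rho0 d c0)) at 2. apply Rmult_le_compat_l; [lra|].
    apply Rle_div_l; lra. }
  pose proof (exp_pos (8 * t)). nra.
Qed.

Lemma a_ge_mu t : 0 <= t -> (forall u, 0 <= u < t -> r u <= 1) -> mu d lam c0 <= a t.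
Proof.
  intros Ht Hr. destruct Hsol as (Ha0 & _). rewrite <- Ha0.
  enough (0 * (t - 0) <= a t - a 0) by lra.
  apply (mvt_ge a da); [easy | intros u Hu; apply abc_derivable; lra |].
  intros u Hu. apply adot_nonneg; [lra | apply Hr; lra].
Qed.

Section Phases.

Variables (rho eps K1 K2 dl : R).
Hypotheses (Hc0 : 0 < c0) (Hrho : 0 < rho < 1 / 12) (Heps : 0 < eps <= 1 / 4)
  (HK1 : 0 < K1) (HK2 : 0 < K2) (Hdl : 0 < dl <= 1 / 8)
  (Hld : large_d d lam c0 rho eps K1 K2 dl).

Local Notation k0 := (Rmin rho eps).
Local Notation ell := (ln (INR d)).
Local Notation ell2 := (ln (ln (INR d))).

Lemma k0_bounds : 0 < k0 <= rho /\ k0 <= eps.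
Proof. split; [split; [apply Rmin_pos; lra | apply Rmin_l] | apply Rmin_r]. Qed.

Lemma four_div_n_le_k0 : 4 / n <= k0.
Proof.
  pose proof (ld_dim Hld). pose proof k0_bounds.
  apply Rle_div_l; [lra|]. rewrite Rmult_comm. apply Rle_div_l; lra.
Qed.

Lemma ell2_pos : 0 < ell2.
Proof.
  pose proof (ld_duration Hld). pose proof (Rinv_0_lt_compat K1 HK1).
  assert (0 < ln 3) by (rewrite <- ln_1; apply ln_increasing; lra). nra.
Qed.

Lemma rho0_lt_1 : rho0 d c0 < 1.
Proof.
  rewrite <- (exp_ln (rho0 d c0)) by apply rho0_pos. rewrite ln_rho0, <- exp_0.
  apply exp_increasing. pose proof ell2_pos. nra.
Qed.

Lemma rho0_lt_rho : rho0 d c0 < rho.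
Proof.
  pose proof (ld_rho0 Hld) as Hsmall. pose proof (rho0_pos d c0).
  assert (1 <= exp (24 * (/ K1 + 2))).
  { rewrite <- exp_0. apply exp_le. pose proof (Rinv_0_lt_compat K1 HK1). lra. }
  apply Rle_div_r in Hsmall; nra.
Qed.

Lemma ln_mu_ge : - 6 * ell <= ln (mu d lam c0).
Proof.
  destruct (ld_lam Hld) as [_ Hhi]. pose proof (ld_mu Hld). pose proof ell2_pos.
  unfold mu, Rdiv.
  rewrite ln_mult, ln_Rinv, ln_rho0 by (try apply Rinv_0_lt_compat; try apply rho0_pos; lra).
  assert (ln (INR d + lam) <= ln (1 + K2) + ell).
  { rewrite <- ln_mult by lra. apply ln_le; nra. }
  nra.
Qed.

Lemma C0_ge : rho0 d c0 / (3 * (1 + K2)) <= n * c 0.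
Proof.
  destruct Hsol as (_ & _ & Hc0' & _). rewrite Hc0'. destruct (ld_lam Hld) as [_ Hhi].
  pose proof (rho0_pos d c0). unfold mu.
  replace (n * (rho0 d c0 / (INR d + lam))) with (rho0 d c0 * (n / (INR d + lam))) by (field; lra).
  unfold Rdiv at 1. apply Rmult_le_compat_l; [lra|].
  apply Rle_div_r; [lra|]. rewrite Rmult_comm. apply Rle_div_l; [lra|]. nra.
Qed.

(* While r < rho < 1/12 the factor bfactor stays above 3/4, so ln b grows at rate 6 L;
   since b starts at mu >= d^-6 and stays below 1, this takes at most 6 ell / (6 L) <= 1 / K1. *)
Lemma phaseA_duration t : 0 <= t -> (forall u, 0 <= u < t -> r u < rho) -> t <= / K1.
Proof.
  intros Ht Hbelow. destruct Ht as [Ht| <-]; [|left; now apply Rinv_0_lt_compat].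
  destruct (ld_lam Hld) as [Hlo _]. pose proof (one_le_ln_INR d Hd).
  assert (Hrt : r t <= rho).
  { apply (continuity_left_le r 0); [apply rr_continuous; lra | easy |].
    intros u Hu. left. apply Hbelow. lra. }
  assert (Hgrowth : 6 * L * (t - 0) <= ln (b t) - ln (b 0)).
  { apply (ln_growth_ge b db); [lra| |].
    - intros u Hu. split; [apply solution_pos | apply abc_derivable]; lra.
    - intros u Hu. rewrite bdot_eq. specialize (Hbelow u ltac:(lra)).
      destruct (solution_pos u ltac:(lra)) as (_ & Hb & _).
      destruct (components_le_rr u ltac:(lra)) as (_ & HLb & _).
      assert (3 / 4 <= g u) by (unfold bfactor; lra).
      assert (0 < L * b u) by nra. nra. }
  assert (Hbt : ln (b t) <= 0).
  { rewrite <- ln_1. destruct (components_le_rr t ltac:(lra)) as (_ & HLb & _).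
    apply ln_le; [apply solution_pos; lra | nra]. }
  destruct Hsol as (_ & Hb0 & _). rewrite Hb0 in Hgrowth. pose proof ln_mu_ge.
  assert (HLt : L * t <= ell) by lra.
  assert (K1 * ell * t <= L * t) by nra.
  replace (/ K1) with (1 / K1) by (field; lra). apply Rle_div_r; [lra|]. nra.
Qed.

Lemma exists_T1a : exists T1a, is_inf (fun t => 0 <= t /\ rho <= r t) T1a /\
  0 < T1a <= / K1 /\ r T1a = rho /\ (forall u, 0 <= u < T1a -> r u < rho).
Proof.
  destruct (first_passage_before r 0 rho (/ K1) rr_continuous phaseA_duration)
    as (T & Hinf & HT & HrT & Hbefore).
  assert (HT0 : 0 < T).
  { destruct HT as [[HT0| <-] _]; [easy|]. rewrite rr_at_0 in HrT. pose proof rho0_lt_rho. lra. }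
  exists T. split; [easy|]. split; [lra|]. split; [|easy].
  enough (r T <= rho) by lra.
  apply (continuity_left_le r 0); [apply rr_continuous; lra | easy |].
  intros u Hu. left. apply Hbefore. lra.
Qed.

(* At T1a both a and C are still O(rho0), so (1 + lam) b carries at least half of r = rho. *)
Lemma b_at_T1a T : 0 <= T <= / K1 -> r T = rho -> rho / 2 <= L * b T.
Proof.
  intros HT HrT. set (E := exp (24 * (/ K1 + 2))).
  pose proof (rho0_pos d c0). pose proof (ld_rho0 Hld) as Hsmall. fold E in Hsmall.
  assert (HE : 0 < E) by apply exp_pos.
  apply Rle_div_r in Hsmall; [|lra].
  assert (HaT : a T <= rho0 d c0 * E).
  { apply (Rle_trans _ _ _ (a_le_exp T ltac:(lra))).
    apply Rmult_le_compat; [left; apply mu_pos | left; apply exp_pos | | apply exp_le; lra].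
    apply (Rle_trans _ _ _ mu_le). apply Rle_div_l; [lra|]. nra. }
  assert (HCT : n * c T <= rho0 d c0 * E).
  { apply (Rle_trans _ _ _ (C_le_exp T ltac:(lra))). apply Rmult_le_compat_l; [lra|].
    apply exp_le. lra. }
  unfold rr in HrT. lra.
Qed.

Lemma ln_c_growth s t : 0 <= s <= t ->
  (forall v, s < v < t -> r v <= 1 /\ k0 <= 1 - r v) -> 4 * k0 * (t - s) <= ln (c t) - ln (c s).
Proof.
  intros Hst Hgood. apply (ln_growth_ge c dc); [lra| |].
  - intros u Hu. split; [apply solution_pos | apply abc_derivable]; lra.
  - intros u Hu. destruct (Hgood u Hu). apply cdot_ge; [lra | apply four_div_n_le_k0 | easy | easy].
Qed.

Lemma c_nondecreasing s t : 0 <= s <= t ->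
  (forall v, s < v < t -> r v <= 1 /\ k0 <= 1 - r v) -> c s <= c t.
Proof.
  intros Hst Hgood. pose proof (ln_c_growth s t Hst Hgood). pose proof k0_bounds.
  apply ln_le_inv; [apply solution_pos; lra | apply solution_pos; lra | nra].
Qed.

Section PhaseB.

Variable T1a : R.
Hypotheses (HT1a : 0 < T1a) (HrT1a : r T1a = rho)
  (Hbefore_T1a : forall u, 0 <= u < T1a -> r u < rho) (HbT1a : rho / 2 <= L * b T1a).

Lemma phaseB_regime u : T1a <= u -> (forall v, T1a <= v <= u -> 0 < g v) ->
  rho / 2 <= L * b u /\ r u < 1 /\ rho <= 1 - r u.
Proof.
  intros Hu Hpos.
  assert (0 * (u - T1a) <= b u - b T1a).
  { apply (mvt_ge b db); [easy | intros v Hv; apply abc_derivable; lra |].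
    intros v Hv. rewrite bdot_eq. specialize (Hpos v ltac:(lra)).
    destruct (solution_pos v ltac:(lra)) as (_ & Hb & _).
    left. apply Rmult_lt_0_compat; [nra | lra]. }
  specialize (Hpos u ltac:(lra)). unfold bfactor in Hpos. nra.
Qed.

Lemma regime_before_T1 t : (forall u, T1a <= u < t -> 0 < g u) ->
  forall v, 0 <= v < t -> r v <= 1 /\ k0 <= 1 - r v.
Proof.
  intros Hpos v Hv. pose proof k0_bounds.
  destruct (Rlt_or_le v T1a) as [Hlt|Hge].
  - specialize (Hbefore_T1a v ltac:(lra)). lra.
  - destruct (phaseB_regime v Hge) as (_ & Hr & Hgap); [intros w Hw; apply Hpos; lra | lra].
Qed.

Lemma exp_decay_le : exp (- 12 * L * rho) <= 4 * rho * (n * c 0).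
Proof.
  pose proof C0_ge. pose proof (rho0_pos d c0). pose proof (ld_phaseB Hld).
  destruct (ld_lam Hld) as [Hlo _]. pose proof (one_le_ln_INR d Hd).
  assert (0 < rho0 d c0 / (3 * (1 + K2))) by (apply Rdiv_lt_0_compat; lra).
  assert (Hln : ln (rho0 d c0 / (3 * (1 + K2))) <= ln (n * c 0)) by (apply ln_le; lra).
  unfold Rdiv in Hln. rewrite ln_mult, ln_Rinv, ln_rho0 in Hln by (try apply Rinv_0_lt_compat; lra).
  rewrite <- (exp_ln (4 * rho * (n * c 0))) by (apply Rmult_lt_0_compat; lra).
  apply exp_le. rewrite ln_mult by lra.
  assert (K1 * ell * rho <= L * rho) by nra.
  lra.
Qed.

Lemma bfactor_dot_phaseB v : T1a <= v -> (forall w, T1a <= w <= v -> 0 < g w) ->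
  dg v <= - 12 * L * rho * g v /\ dg v <= - 4 * rho * (n * c 0).
Proof.
  intros Hv Hpos. pose proof k0_bounds. pose proof four_div_n_le_k0.
  destruct (phaseB_regime v Hv Hpos) as (HLb & Hr & Hgap).
  assert (Hc : c 0 <= c v).
  { apply c_nondecreasing; [lra|]. intros w Hw. apply (regime_before_T1 v); [|lra].
    intros u Hu. apply Hpos. lra. }
  pose proof (adot_nonneg v ltac:(lra) ltac:(lra)).
  pose proof (cdot_ge rho v ltac:(lra) ltac:(lra) ltac:(lra) Hgap).
  pose proof (Hpos v ltac:(lra)). destruct (solution_pos v ltac:(lra)) as (_ & _ & Hcv).
  assert (HLg : 0 <= 24 * L * g v) by nra.
  assert (Hb : 24 * L * g v * (rho / 2) <= 24 * L * g v * (L * b v))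
    by (apply Rmult_le_compat_l; lra).
  assert (Hb0 : 0 <= 24 * L * g v * (L * b v)) by (apply Rmult_le_pos; nra).
  assert (Hc' : n * (4 * rho * c 0) <= n * dc v)
    by (apply Rmult_le_compat_l; [lra|]; pose proof (proj1 Hrho); nra).
  destruct (solution_pos 0 ltac:(lra)) as (_ & _ & Hc0pos).
  assert (0 <= n * (4 * rho * c 0)) by (apply Rmult_le_pos; nra).
  rewrite bfactor_dot_eq. split; lra.
Qed.

(* bfactor first decays exponentially (rate 12 L rho) for one unit of time, down to 4 rho C(0),
   and then linearly at rate 4 rho C(0) because C keeps growing. *)
Lemma phaseB_duration t : T1a <= t -> (forall u, T1a <= u < t -> 0 < g u) -> t <= T1a + 2.
Proof.
  intros Ht Hpos. apply Rnot_lt_le. intro Hlong.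
  assert (Hg : forall v, T1a <= v <= T1a + 2 -> 0 < g v) by (intros v Hv; apply Hpos; lra).
  assert (Hslope : forall v, T1a <= v <= T1a + 2 ->
    dg v <= - 12 * L * rho * g v /\ dg v <= - 4 * rho * (n * c 0)).
  { intros v Hv. apply bfactor_dot_phaseB; [lra|]. intros w Hw. apply Hg. lra. }
  assert (Hexp : ln (g (T1a + 1)) - ln (g T1a) <= - 12 * L * rho * (T1a + 1 - T1a)).
  { apply (ln_growth_le g dg); [lra| |].
    - intros u Hu. split; [apply Hg; lra | apply bfactor_derivable; lra].
    - intros u Hu. apply Hslope. lra. }
  assert (HgT1a : ln (g T1a) <= 0).
  { rewrite <- ln_1. apply ln_le; [apply Hg; lra|].
    destruct (components_le_rr T1a ltac:(lra)) as (_ & HLb & _).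
    destruct (solution_pos T1a ltac:(lra)) as (_ & Hb & _). unfold bfactor. nra. }
  assert (Hg1 : g (T1a + 1) <= 4 * rho * (n * c 0)).
  { apply (Rle_trans _ (exp (- 12 * L * rho))); [|apply exp_decay_le].
    rewrite <- (exp_ln (g (T1a + 1))) by (apply Hg; lra). apply exp_le. lra. }
  assert (Hlin : g (T1a + 2) - g (T1a + 1) <= - 4 * rho * (n * c 0) * (T1a + 2 - (T1a + 1))).
  { apply (mvt_le g dg); [lra | intros u Hu; apply bfactor_derivable; lra |].
    intros u Hu. apply Hslope. lra. }
  specialize (Hg (T1a + 2) ltac:(lra)). lra.
Qed.

Lemma exists_T1 : exists T1, is_inf (fun t => T1a <= t /\ db t <= 0) T1 /\
  T1a < T1 <= T1a + 2 /\ 0 <= g T1 /\ (forall u, T1a <= u < T1 -> 0 < g u).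
Proof.
  destruct (first_passage_before (fun t => - g t) T1a 0 (T1a + 2))
    as (T & Hinf & HT & HgT & Hbefore).
  - intros t Ht. exact (continuity_pt_opp g t (bfactor_continuous t ltac:(lra))).
  - intros t Ht Hneg. apply phaseB_duration; [easy|]. intros u Hu. specialize (Hneg u Hu). lra.
  - assert (Hpos : forall u, T1a <= u < T -> 0 < g u)
      by (intros u Hu; specialize (Hbefore u Hu); lra).
    assert (HgT1a : 0 < g T1a).
    { destruct (components_le_rr T1a ltac:(lra)) as (_ & HLb & _). unfold bfactor. lra. }
    assert (HT1 : T1a < T) by (destruct HT as [[HT1| <-] _]; lra).
    exists T. split; [|split; [lra | split; [|easy]]].
    + refine (is_inf_iff _ _ _ _ Hinf). intros t.
      split; intros [Ht Hgt]; split; try easy;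
        destruct (bdot_nonpos_iff t ltac:(lra)) as [Hto Hfrom];
        [apply Hfrom | apply Hto in Hgt]; lra.
    + apply (continuity_left_ge g T1a); [apply bfactor_continuous; lra | easy |].
      intros u Hu. left. apply Hpos. lra.
Qed.

Section PhaseC.

Variable T1 : R.
Hypotheses (HT1 : T1a < T1) (HgT1 : 0 <= g T1) (Hbefore_T1 : forall u, T1a <= u < T1 -> 0 < g u).

Lemma regime_before_T2a t : (forall u, T1 <= u < t -> r u < 1 - eps) ->
  forall v, 0 <= v < t -> r v <= 1 /\ k0 <= 1 - r v.
Proof.
  intros Hbelow v Hv. pose proof k0_bounds.
  destruct (Rlt_or_le v T1) as [Hlt|Hge].
  - apply (regime_before_T1 T1); [easy | lra].
  - specialize (Hbelow v ltac:(lra)). lra.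
Qed.

(* C grows at rate >= 4 k0 from C(0) >= rho0 / (3 (1 + K2)) and cannot exceed 1. *)
Lemma phaseC_duration t : T1 <= t -> (forall u, T1 <= u < t -> r u < 1 - eps) ->
  t <= c0 * ell2 / (2 * k0).
Proof.
  intros Ht Hbelow. pose proof k0_bounds. pose proof (regime_before_T2a t Hbelow) as Hgood.
  assert (Hrt : r t <= 1).
  { apply (continuity_left_le r 0); [apply rr_continuous; lra | lra |].
    intros u Hu. apply Hgood. lra. }
  pose proof (ln_c_growth 0 t ltac:(lra) (fun v Hv => Hgood v ltac:(lra))) as Hgrow.
  destruct (components_le_rr t ltac:(lra)) as (_ & _ & HCt).
  destruct (solution_pos t ltac:(lra)) as (_ & _ & Hct).
  destruct (solution_pos 0 ltac:(lra)) as (_ & _ & Hc0').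
  pose proof C0_ge. pose proof (rho0_pos d c0). pose proof (ld_phaseC Hld).
  assert (HlnCt : ln (n * c t) <= 0) by (rewrite <- ln_1; apply ln_le; nra).
  assert (HlnC0 : ln (rho0 d c0 / (3 * (1 + K2))) <= ln (n * c 0))
    by (apply ln_le; [apply Rdiv_lt_0_compat|]; lra).
  unfold Rdiv in HlnC0.
  rewrite ln_mult, ln_Rinv, ln_rho0 in HlnC0 by (try apply Rinv_0_lt_compat; lra).
  rewrite (ln_mult n (c t)) in HlnCt by lra. rewrite (ln_mult n (c 0)) in HlnC0 by lra.
  apply Rle_div_r; lra.
Qed.

Lemma exists_T2a : exists T2a, is_inf (fun t => T1 <= t /\ 1 - eps <= r t) T2a /\
  T1 <= T2a <= c0 * ell2 / (2 * k0) /\ 1 - eps <= r T2a <= 1 /\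
  (forall u, T1 <= u < T2a -> r u < 1 - eps).
Proof.
  destruct (first_passage_before r T1 (1 - eps) (c0 * ell2 / (2 * k0)))
    as (T & Hinf & HT & HrT & Hbefore).
  - intros t Ht. apply rr_continuous. lra.
  - exact phaseC_duration.
  - exists T. split; [easy|]. split; [easy|]. split; [split; [easy|] | easy].
    apply (continuity_left_le r 0); [apply rr_continuous; lra | lra |].
    intros u Hu. apply (regime_before_T2a T Hbefore u). lra.
Qed.

(* Once b dominates, bfactor cannot go below -3 / (L eps): there its derivative is positive. *)
Lemma bfactor_barrier T2a : T1 <= T2a -> (forall u, T1 <= u < T2a -> r u < 1 - eps) ->
  - (3 / (L * eps)) <= g T2a.
Proof.
  intros HT2a Hbelow.
  assert (0 < 3 / (L * eps)) by (apply Rdiv_lt_0_compat; nra).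
  apply (derive_barrier g dg T1 T2a); [| lra | | lra].
  - intros u Hu. apply bfactor_derivable. lra.
  - intros u Hu Hgu. apply (bfactor_dot_pos eps); [lra | lra | apply Hbelow; lra | easy].
Qed.

End PhaseC.

End PhaseB.

Lemma C_at_T2a t : 0 <= t -> 1 - eps <= r t <= 1 -> - (3 / (L * eps)) <= g t -> a t <= dl ->
  2 / 3 - eps - dl <= n * c t /\ 1 / 3 <= n * c t <= 1.
Proof.
  intros Ht Hr Hg Ha.
  assert (Heta : 3 / (L * eps) <= 1 / 12).
  { pose proof (ld_barrier Hld). destruct (ld_lam Hld) as [Hlo _].
    pose proof (proj1 Heps). assert (36 <= L * eps) by (apply (Rle_div_l 36 L eps); lra).
    apply Rle_div_l; lra. }
  destruct (components_le_rr t Ht) as (Har & HLb & HC).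
  destruct (solution_pos t Ht) as (Hapos & Hbpos & _). assert (0 < L * b t) by nra.
  unfold bfactor in Hg. unfold rr in *. lra.
Qed.

Lemma duration_ge s t : 0 <= s <= t -> s <= / K1 + 2 -> 1 / 3 <= n * c t ->
  c0 * ell2 / 16 <= t - s.
Proof.
  intros Hst Hs HCt. pose proof (ld_duration Hld). pose proof (rho0_pos d c0).
  pose proof (ln_c_lipschitz s t Hst) as Hlip.
  destruct (solution_pos s ltac:(lra)) as (_ & _ & Hcs).
  destruct (solution_pos t ltac:(lra)) as (_ & _ & Hct).
  assert (Hup : ln (n * c s) <= ln (rho0 d c0 * exp (8 * (/ K1 + 2)))).
  { apply ln_le; [nra|]. apply (Rle_trans _ _ _ (C_le_exp s ltac:(lra))).
    apply Rmult_le_compat_l; [lra|]. apply exp_le. lra. }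
  assert (Hlow : ln (1 / 3) <= ln (n * c t)) by (apply ln_le; lra).
  rewrite (ln_mult (rho0 d c0)), ln_exp, ln_rho0 in Hup by (try apply exp_pos; lra).
  rewrite (ln_mult n (c s)) in Hup by lra. rewrite (ln_mult n (c t)) in Hlow by lra.
  unfold Rdiv in Hlow. rewrite Rmult_1_l, ln_Rinv in Hlow by lra.
  lra.
Qed.

Lemma ln_a_le t : 0 <= t <= c0 * ell2 / (2 * k0) ->
  ln (a t) - ln (mu d lam c0) <= 12 / k0 * - ln (rho0 d c0).
Proof.
  intros Ht. pose proof k0_bounds. rewrite ln_rho0.
  assert (Ha : ln (a t) <= ln (mu d lam c0 * exp (24 * t)))
    by (apply ln_le; [apply solution_pos; lra | apply a_le_exp; lra]).
  rewrite ln_mult, ln_exp in Ha by (try apply mu_pos; apply exp_pos).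
  replace (12 / k0 * - (- c0 * ell2)) with (24 * (c0 * ell2 / (2 * k0))) by (field; lra).
  lra.
Qed.

(* a t <= d^-1 exp (24 t) and here 24 t = O(log log d), so sqrt d a t = d^{-1/2 + o(1)}. *)
Lemma sqrt_d_a_le t : 0 <= t <= c0 * ell2 / (2 * k0) -> 3 * (sqrt (INR d) * a t) <= dl.
Proof.
  intros Ht. pose proof k0_bounds. pose proof (ld_align Hld). pose proof rho0_lt_1.
  pose proof (rho0_pos d c0).
  assert (Ha : a t <= exp (- ell) * exp (12 * c0 / k0 * ell2)).
  { apply (Rle_trans _ _ _ (a_le_exp t ltac:(lra))).
    apply Rmult_le_compat; [left; apply mu_pos | left; apply exp_pos | |].
    - apply (Rle_trans _ _ _ mu_le). rewrite exp_Ropp, exp_ln by lra.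
      apply Rle_div_l; [lra|]. rewrite Rinv_l; lra.
    - apply exp_le.
      replace (12 * c0 / k0 * ell2) with (24 * (c0 * ell2 / (2 * k0))) by (field; lra). lra. }
  rewrite <- Rpower_sqrt by lra. unfold Rpower. rewrite <- (exp_ln dl) by lra.
  apply (Rle_trans _ (exp (ln 3) * (exp (/ 2 * ell) * (exp (- ell) * exp (12 * c0 / k0 * ell2))))).
  - rewrite exp_ln by lra. apply Rmult_le_compat_l; [lra|].
    apply Rmult_le_compat_l; [left; apply exp_pos | easy].
  - rewrite <- !exp_plus. apply exp_le. lra.
Qed.

Lemma phase_times : exists T1a T1 T2a : R,
  is_inf (fun t => 0 <= t /\ rho <= r t) T1a /\
  is_inf (fun t => T1a <= t /\ db t <= 0) T1 /\
  is_inf (fun t => T1 <= t /\ 1 - eps <= r t) T2a /\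
  c0 * ell2 / 16 <= T2a - T1 <= c0 * ell2 / (2 * k0) /\
  2 / 3 - eps - dl <= n * c T2a /\ 1 / 3 <= n * c T2a <= 1 /\
  (exists e, Rabs e <= 12 / k0 /\ a T2a = mu d lam c0 * Rpower (rho0 d c0) (- e)) /\
  a T2a <= dl /\ Align d a b c T2a <= 3 * (sqrt (INR d) * a T2a) <= dl.
Proof.
  destruct exists_T1a as (T1a & Hinf1 & [HT1a HT1aK] & HrT1a & Hbefore1).
  pose proof (b_at_T1a T1a ltac:(lra) HrT1a) as HbT1a.
  destruct (exists_T1 T1a HT1a HrT1a Hbefore1 HbT1a) as (T1 & Hinf2 & HT1 & HgT1 & Hbefore2).
  destruct (exists_T2a T1a HT1a Hbefore1 HbT1a T1 (proj1 HT1) Hbefore2)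
    as (T2a & Hinf3 & HT2a & HrT2a & Hbefore3).
  pose proof (bfactor_barrier T1a HT1a T1 (proj1 HT1) HgT1 T2a (proj1 HT2a) Hbefore3) as Hbarrier.
  pose proof (sqrt_d_a_le T2a ltac:(lra)) as Hsqrt.
  destruct (solution_pos T2a ltac:(lra)) as (Ha & _).
  assert (Hadl : a T2a <= dl).
  { assert (1 <= sqrt (INR d)) by (rewrite <- sqrt_1; apply sqrt_le_1_alt; lra). nra. }
  destruct (C_at_T2a T2a ltac:(lra) HrT2a Hbarrier Hadl) as (HC & HC13).
  assert (Hmu : mu d lam c0 <= a T2a).
  { apply a_ge_mu; [lra|]. intros u Hu.
    exact (proj1 (regime_before_T2a T1a HT1a Hbefore1 HbT1a T1 Hbefore2 T2a Hbefore3 u Hu)). }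
  exists T1a, T1, T2a. do 3 (split; [easy|]).
  split; [split; [apply duration_ge; lra | lra]|].
  do 2 (split; [easy|]). split; [|split; [easy|]].
  - apply Rpower_exponent_bound; [split; [apply rho0_pos | apply rho0_lt_1] | |].
    + split; [apply mu_pos | easy].
    + apply ln_a_le. lra.
  - split; [apply Align_le; lra | easy].
Qed.

End Phases.

End Dynamics.

Lemma inv_bounds_of_scaled n x : 3 <= n -> 1 / 3 <= (n - 2) * x <= 1 -> 1 / 3 / n <= x <= 3 / n.
Proof.
  intros Hn Hx. split.
  - apply Rle_div_l; [lra|]. nra.
  - apply Rle_div_r; [lra|]. nra.
Qed.

Lemma rescale_Theta_bounds c0 k0 x y : 0 < c0 -> 0 < k0 -> 0 <= x ->
  c0 * x / 16 <= y <= c0 * x / (2 * k0) ->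
  Rmin 1 c0 / 16 * (c0 * x) <= y <= (1 + c0) / (2 * k0) * (c0 * x) /\
  Rmin 1 c0 / 16 * x <= y <= (1 + c0) / (2 * k0) * x.
Proof.
  intros Hc0 Hk0 Hx Hy. pose proof (Rmin_l 1 c0). pose proof (Rmin_r 1 c0).
  assert (0 <= c0 * x / (2 * k0)) by (apply Rdiv_le_0_compat; nra).
  replace ((1 + c0) / (2 * k0) * (c0 * x)) with (c0 * x / (2 * k0) + c0 * (c0 * x / (2 * k0)))
    by (field; lra).
  replace ((1 + c0) / (2 * k0) * x) with (c0 * x / (2 * k0) + x / (2 * k0)) by (field; lra).
  assert (0 <= x / (2 * k0)) by (apply Rdiv_le_0_compat; lra).
  assert (0 <= c0 * x) by nra.
  repeat split; nra.
Qed.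

Theorem propositionB5 (lam : nat -> R) (c0 rho eps : R) :
  0 < c0 -> 0 < rho < 1 / 12 -> 0 < eps <= 1 / 4 ->
  (forall d : nat, (3 <= d)%nat -> 0 < lam d) ->
  (exists (K1 K2 : R) (D : nat), 0 < K1 /\ 0 < K2 /\
     forall d : nat, (D <= d)%nat -> K1 * ln (INR d) <= lam d <= K2 * INR d) ->
  exists k1 k2 kc1 kc2 Ka KA : R,
    0 < k1 /\ 0 < k2 /\ 0 < kc1 /\ 0 < kc2 /\ 0 < Ka /\ 0 < KA /\
    forall delta : R, 0 < delta ->
    exists D0 : nat, forall d : nat, (3 <= d)%nat -> (D0 <= d)%nat ->
    forall a b c : R -> R, solves d (lam d) c0 a b c ->
    let r := rr d (lam d) a b c in
    exists T1a T1 T2a : R,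
      is_inf (fun t => 0 <= t /\ rho <= r t) T1a /\
      is_inf (fun t => T1a <= t /\ bdot d (lam d) a b c t <= 0) T1 /\
      is_inf (fun t => T1 <= t /\ 1 - eps <= r t) T2a /\
      (* (1) T2a - T1 = Theta(log(1/rho0)) = Theta(log log d) *)
      k1 * ln (/ rho0 d c0) <= T2a - T1 <= k2 * ln (/ rho0 d c0) /\
      k1 * ln (ln (INR d)) <= T2a - T1 <= k2 * ln (ln (INR d)) /\
      (* (2) C(T2a) >= 2/3 - eps - o(1), c(T2a) = Theta(1/d) *)
      2 / 3 - eps - delta <= (INR d - 2) * c T2a /\
      kc1 / INR d <= c T2a <= kc2 / INR d /\
      (* (3) a(T2a) = mu * rho0^{-O(1)} = o(1) *)
      (exists e : R, Rabs e <= Ka /\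
         a T2a = mu d (lam d) c0 * Rpower (rho0 d c0) (- e)) /\
      a T2a <= delta /\
      (* (4) Align(T2a) <= O(sqrt d * a(T2a)) = o(1) *)
      Align d a b c T2a <= KA * (sqrt (INR d) * a T2a) /\
      Align d a b c T2a <= delta.
Proof.
  intros Hc0 Hrho Heps Hlam (K1 & K2 & D & HK1 & HK2 & HK).
  pose proof (Rmin_pos rho eps (proj1 Hrho) (proj1 Heps)) as Hk0.
  pose proof (Rmin_pos 1 c0 Rlt_0_1 Hc0).
  exists (Rmin 1 c0 / 16), ((1 + c0) / (2 * Rmin rho eps)), (1 / 3), 3, (12 / Rmin rho eps), 3.
  do 6 (split; [try apply Rdiv_lt_0_compat; lra|]).
  intros delta Hdelta. set (dl := Rmin delta (1 / 8)).
  assert (Hdl : 0 < dl <= 1 / 8) by (split; [apply Rmin_pos | apply Rmin_r]; lra).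
  assert (Hdl_delta : dl <= delta) by apply Rmin_l.
  destruct (large_d_eventually lam c0 rho eps K1 K2 dl Hc0 (proj1 Hrho) (proj1 Heps) HK1 HK2
    (ex_intro _ D HK)) as [D0 HD0].
  exists D0. intros d Hd3 HdD0 a b c Hsol r.
  assert (Hd : 3 <= INR d) by (apply le_INR in Hd3; simpl in Hd3; lra).
  destruct (phase_times d (lam d) c0 a b c Hd (Hlam d Hd3) Hsol rho eps K1 K2 dl
    Hc0 Hrho Heps HK1 HK2 Hdl (HD0 d HdD0))
    as (T1a & T1 & T2a & Hinf1 & Hinf2 & Hinf3 & Hdur & HC & HC13 & Ha & Hadl & HAlign & Hsqrt).
  exists T1a, T1, T2a. do 3 (split; [easy|]).
  rewrite ln_inv_rho0.
  destruct (rescale_Theta_bounds c0 (Rmin rho eps) (ln (ln (INR d))) (T2a - T1) Hc0 Hk0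
    (lnln_INR_nonneg d Hd) Hdur) as [Hdur1 Hdur2].
  do 2 (split; [easy|]). split; [lra|].
  split; [apply inv_bounds_of_scaled; lra|].
  split; [easy|].
  split; [lra|].
  split; lra.
Qed.
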